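(* Let $G_0$ be a locally compact totally disconnected group, and let $C,D\subset G_0$ be closed subgroups, each isomorphic (as topological groups) to $F^m$ for some $m$, in duality via a non-degenerate $F$-bilinear pairing $\langle\cdot,\cdot\rangle':C\times D\to F$. Let $\chi$ be a continuous character of $D$, and let $f$ be a function on $G_0$ right-invariant under some open compact subgroup such that $f(cd)=f(c)\chi(d)\psi(\langle c,d\rangle')$ for all $c\in C$, $d\in D$. Then $f|_C$ is compactly supported. Moreover, if $f$ is right-invariant under a fixed open compact subgroup $K_0$ and $\langle\cdot,\cdot\rangle'$ ranges over a compact set $\tilde\Omega$ of non-degenerate pairings, then the support of $f|_C$ is contained in a compact set depending only on $K_0$, $\tilde\Omega$ and the conductor of $\chi$.
   Context: $F$ is a $p$-adic field and $\psi$ a nontrivial continuous additive character of $F$. *)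

From Stdlib Require Import Rdefinitions List.
From HB Require Import structures.
From mathcomp Require Import all_boot all_order all_algebra.
Set Implicit Arguments. Unset Strict Implicit. Unset Printing Implicit Defensive.
Import Order.TTheory GRing.Theory Num.Theory.
Local Open Scope ring_scope.

Definition is_topology {T : Type} (op : (T -> Prop) -> Prop) : Prop :=
  op (fun _ => True) /\
  (forall (I : Type) (U : I -> T -> Prop),
      (forall i, op (U i)) -> op (fun x => exists i, U i x)) /\
  (forall U V, op U -> op V -> op (fun x => U x /\ V x)).

Definition is_compact {T : Type} (op : (T -> Prop) -> Prop) (K : T -> Prop) : Prop :=
  forall (I : Type) (U : I -> T -> Prop),
    (forall i, op (U i)) -> (forall x, K x -> exists i, U i x) ->
    exists l : list I, forall x, K x -> exists i, List.In i l /\ U i x.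

Definition is_closed {T : Type} (op : (T -> Prop) -> Prop) (A : T -> Prop) : Prop :=
  op (fun x => ~ A x).

Definition continuous_on {T S : Type} (opT : (T -> Prop) -> Prop) (A : T -> Prop)
  (opS : (S -> Prop) -> Prop) (g : T -> S) : Prop :=
  forall V, opS V -> exists U, opT U /\ forall x, A x -> (U x <-> V (g x)).

Definition is_connected {T : Type} (op : (T -> Prop) -> Prop) (S : T -> Prop) : Prop :=
  ~ (exists U V, op U /\ op V /\
       (forall x, S x -> U x \/ V x) /\
       (exists x, S x /\ U x) /\ (exists x, S x /\ V x) /\
       (forall x, S x -> U x -> V x -> False)).

Definition totally_disconnected {T : Type} (op : (T -> Prop) -> Prop) : Prop :=
  forall S, is_connected op S -> forall x y, S x -> S y -> x = y.

Definition hausdorff {T : Type} (op : (T -> Prop) -> Prop) : Prop :=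
  forall x y : T, x <> y -> exists U V, op U /\ op V /\ U x /\ V y /\
    (forall z, U z -> V z -> False).

Definition locally_compact {T : Type} (op : (T -> Prop) -> Prop) : Prop :=
  forall x : T, exists U K, op U /\ U x /\ (forall y, U y -> K y) /\ is_compact op K.

Record tdlcGroup := TdlcGroup {
  tg_sort :> Type;
  tg_mul : tg_sort -> tg_sort -> tg_sort;
  tg_inv : tg_sort -> tg_sort;
  tg_one : tg_sort;
  tg_open : (tg_sort -> Prop) -> Prop;
  tg_mulA : forall x y z, tg_mul x (tg_mul y z) = tg_mul (tg_mul x y) z;
  tg_mul1g : forall x, tg_mul tg_one x = x;
  tg_mulVg : forall x, tg_mul (tg_inv x) x = tg_one;
  tg_topology : is_topology tg_open;
  tg_mul_cont : forall x y V, tg_open V -> V (tg_mul x y) ->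
     exists U1 U2, tg_open U1 /\ tg_open U2 /\ U1 x /\ U2 y /\
       (forall a b, U1 a -> U2 b -> V (tg_mul a b));
  tg_inv_cont : forall V, tg_open V -> tg_open (fun x => V (tg_inv x));
  tg_hausdorff : hausdorff tg_open;
  tg_locally_compact : locally_compact tg_open;
  tg_totally_disconnected : totally_disconnected tg_open
}.

Definition subgroup (G : tdlcGroup) (H : G -> Prop) : Prop :=
  H (tg_one G) /\ (forall x y, H x -> H y -> H (tg_mul x y)) /\
  (forall x, H x -> H (tg_inv x)).

Definition closed_subgroup (G : tdlcGroup) (H : G -> Prop) : Prop :=
  subgroup H /\ is_closed (@tg_open G) H.

Definition open_compact_subgroup (G : tdlcGroup) (K : G -> Prop) : Prop :=
  subgroup K /\ tg_open K /\ is_compact (@tg_open G) K.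

Definition right_invariant (G : tdlcGroup) {V : Type} (K : G -> Prop) (f : G -> V) : Prop :=
  forall g k, K k -> f (tg_mul g k) = f g.

(* x lies in P^k, i.e. x = 0 or v(x) >= k. *)
Definition vge {T : zmodType} (val : T -> int) (k : int) (x : T) : bool :=
  (x == 0) || (k <= val x).

Record padicField := PadicField {
  pf_sort :> fieldType;
  pf_val : pf_sort -> int;           (* normalized valuation on F^x *)
  pf_unif : pf_sort;
  pf_char0 : [pchar pf_sort] =i pred0;
  pf_valM : forall x y : pf_sort, x != 0 -> y != 0 ->
     pf_val (x * y) = pf_val x + pf_val y;
  pf_valD : forall x y : pf_sort, x != 0 -> y != 0 -> x + y != 0 ->
     Num.min (pf_val x) (pf_val y) <= pf_val (x + y);
  pf_unifP : pf_unif != 0 /\ pf_val pf_unif = 1;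
  pf_complete : forall u : nat -> pf_sort,
     (forall k, exists N, forall i j, (N <= i)%N -> (N <= j)%N ->
         vge pf_val k (u i - u j)) ->
     exists l, forall k, exists N, forall i, (N <= i)%N -> vge pf_val k (u i - l);
  pf_residue_finite : exists s : seq pf_sort,
     (forall r, r \in s -> vge pf_val 0 r) /\
     (forall x, vge pf_val 0 x -> exists2 r, r \in s & vge pf_val 1 (x - r))
}.

Definition F_open (F : padicField) (U : F -> Prop) : Prop :=
  forall x, U x -> exists k, forall y, vge (@pf_val F) k (y - x) -> U y.

Definition mx_open (F : padicField) (a b : nat) (U : 'M[F]_(a, b) -> Prop) : Prop :=
  forall x, U x -> exists k, forall y : 'M[F]_(a, b),
      (forall i j, vge (@pf_val F) k (y i j - x i j)) -> U y.

Definition lattice_k (F : padicField) (n : nat) (k : int) (y : 'rV[F]_n) : Prop :=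
  forall i, vge (@pf_val F) k (y 0 i).

Definition Cx : Type := (R * R)%type.
Definition Czero : Cx := (R0, R0).
Definition Cone : Cx := (R1, R0).
Definition Cmul (z w : Cx) : Cx :=
  (Rminus (Rmult (fst z) (fst w)) (Rmult (snd z) (snd w)),
   Rplus (Rmult (fst z) (snd w)) (Rmult (snd z) (fst w))).
Definition Cx_open (U : Cx -> Prop) : Prop :=
  forall z, U z -> exists eps, Rlt R0 eps /\ forall w,
    Rlt (Rplus (Rmult (Rminus (fst w) (fst z)) (Rminus (fst w) (fst z)))
              (Rmult (Rminus (snd w) (snd z)) (Rminus (snd w) (snd z)))) eps ->
    U w.

Definition additive_character (F : padicField) (psi : F -> Cx) : Prop :=
  (forall x y, psi (x + y) = Cmul (psi x) (psi y)) /\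
  (forall x, psi x <> Czero) /\
  continuous_on (@F_open F) (fun _ => True) Cx_open psi.

Definition continuous_character (G : tdlcGroup) (D : G -> Prop) (chi : G -> Cx) : Prop :=
  (forall x y, D x -> D y -> chi (tg_mul x y) = Cmul (chi x) (chi y)) /\
  (forall x, D x -> chi x <> Czero) /\
  continuous_on (@tg_open G) D Cx_open chi.

Definition topgroup_iso_onto (F : padicField) (G : tdlcGroup) (m : nat)
  (phi : 'rV[F]_m -> G) (H : G -> Prop) : Prop :=
  (forall x y, phi (x + y) = tg_mul (phi x) (phi y)) /\
  injective phi /\
  (forall g, H g <-> exists x, g = phi x) /\
  continuous_on (@mx_open F 1 m) (fun _ => True) (@tg_open G) phi /\
  (forall U, mx_open U -> exists V, tg_open V /\ forall x, U x <-> V (phi x)).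

Definition pairing (F : padicField) (m n : nat) (A : 'M[F]_(m, n))
  (x : 'rV[F]_m) (y : 'rV[F]_n) : F := (x *m A *m y^T) 0 0.

Definition nondegenerate_pairing (F : padicField) (m n : nat) (A : 'M[F]_(m, n)) : Prop :=
  (forall x, (forall y, pairing A x y = 0) -> x = 0) /\
  (forall y, (forall x, pairing A x y = 0) -> y = 0).

Definition conductor_le (F : padicField) (G : tdlcGroup) (n : nat)
  (phiD : 'rV[F]_n -> G) (chi : G -> Cx) (k : int) : Prop :=
  forall y, lattice_k k y -> chi (phiD y) = Cone.

Definition equivariant (F : padicField) (G : tdlcGroup) (m n : nat)
  (phiC : 'rV[F]_m -> G) (phiD : 'rV[F]_n -> G) (A : 'M[F]_(m, n))
  (psi : F -> Cx) (chi : G -> Cx) (f : G -> Cx) : Prop :=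
  forall x y, f (tg_mul (phiC x) (phiD y)) =
              Cmul (Cmul (f (phiC x)) (chi (phiD y))) (psi (pairing A x y)).

(* If f(c) <> 0 and d lies in an open compact subgroup K under which f is right-invariant,
   the functional equation gives chi(d) psi(<c, d>') = 1; K contains the image of a lattice
   (P^j)^n of D.  Dividing two such identities (or using that chi is trivial on (P^j)^n when
   its conductor is small) shows that psi(<c - c', .>') (resp. psi(<c, .>')) is trivial on
   (P^j)^n, and since psi is nontrivial this forces c - c' (resp. c) into a lattice of C.  Lattices are compact (finite residue
   field plus completeness), and over a compact set of nondegenerate pairings the lattice
   bound is uniform, because a small perturbation of a matrix with a bounded right inverse
   obeys the same bound. *)

From Stdlib Require Import Reals Lra Classical ClassicalEpsilon.
From mathcomp Require Import all_boot all_order all_algebra zify.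
Set Implicit Arguments. Unset Strict Implicit. Unset Printing Implicit Defensive.
Import Order.TTheory GRing.Theory Num.Theory.
Local Open Scope ring_scope.

Section Valuation.
Variable F : padicField.
Local Notation val := (@pf_val F).
Local Notation vge := (vge (@pf_val F)).

Lemma pf_val1 : val 1 = 0.
Proof. by have := @pf_valM F 1 1 (oner_neq0 _) (oner_neq0 _); rewrite mulr1; lia. Qed.

Lemma pf_valN x : x != 0 -> val (- x) = val x.
Proof.
move=> x0; have N10 : (-1 : F) != 0 by rewrite oppr_eq0 oner_neq0.
have valN1 : val (-1) = 0.
  by have := @pf_valM F (-1) (-1) N10 N10; rewrite mulrNN mulr1 pf_val1; lia.
by rewrite -mulN1r pf_valM // valN1 add0r.
Qed.

Lemma pf_valV x : x != 0 -> val x^-1 = - val x.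
Proof.
by move=> x0; have := @pf_valM F x x^-1 x0 (invr_neq0 x0); rewrite mulfV // pf_val1; lia.
Qed.

Lemma pf_val_div x z : x != 0 -> z != 0 -> val (x / z) = val x - val z.
Proof. by move=> x0 z0; rewrite pf_valM ?invr_neq0 // pf_valV. Qed.

Lemma exists_pf_val (e : int) : exists z : F, z != 0 /\ val z = e.
Proof.
have [u0 valu] := @pf_unifP F.
have valX (k : nat) : val (pf_unif F ^+ k) = k.
  elim: k => [|k IH]; first by rewrite expr0 pf_val1.
  by rewrite exprS pf_valM ?expf_neq0 // IH valu; lia.
case: e => k; first by exists (pf_unif F ^+ k); rewrite expf_neq0 // valX.
exists (pf_unif F ^+ k.+1)^-1.
by rewrite invr_neq0 ?expf_neq0 // pf_valV ?expf_neq0 // valX NegzE.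
Qed.

Lemma vge0 k : vge k 0.
Proof. by rewrite /vge eqxx. Qed.

Lemma vge_val x : vge (val x) x.
Proof. by rewrite /vge lexx orbT. Qed.

Lemma vgeW k l x : l <= k -> vge k x -> vge l x.
Proof. by rewrite /vge => lk /orP [->|/(le_trans lk) ->]; rewrite ?orbT. Qed.

Lemma vgeN k x : vge k x -> vge k (- x).
Proof.
rewrite /vge oppr_eq0; have [->|x0] := eqVneq x 0 => //=.
by rewrite pf_valN.
Qed.

Lemma vgeD k x y : vge k x -> vge k y -> vge k (x + y).
Proof.
rewrite /vge; have [->|x0] := eqVneq x 0; first by rewrite add0r.
have [->|y0] := eqVneq y 0; first by rewrite addr0 (negbTE x0) => ? _.
have [//|xy0 /= kx ky] := eqVneq (x + y) 0.
by apply: le_trans (pf_valD x0 y0 xy0); rewrite le_min kx ky.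
Qed.

Lemma vgeB k x y : vge k x -> vge k y -> vge k (x - y).
Proof. by move=> kx ky; apply: vgeD => //; apply: vgeN. Qed.

Lemma vgeM k l x y : vge k x -> vge l y -> vge (k + l) (x * y).
Proof.
rewrite /vge mulf_eq0; have [//|x0] := eqVneq x 0; have [//|y0 /= kx ly] := eqVneq y 0.
by rewrite pf_valM // lerD.
Qed.

Lemma vge_sum (J : Type) (r : seq J) (P : pred J) (g : J -> F) k :
  (forall i, P i -> vge k (g i)) -> vge k (\sum_(i <- r | P i) g i).
Proof. by move=> kg; apply: (big_ind (vge k)) => //; [exact: vge0 | exact: vgeD]. Qed.

Lemma vge_residue_cover k : exists2 s : seq F, {in s, forall r, vge k r} &
  forall x, vge k x -> exists2 r, r \in s & vge (k + 1) (x - r).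
Proof.
have [s [s0 sres]] := pf_residue_finite F.
have [z [z0 valz]] := exists_pf_val k.
exists [seq z * r | r <- s] => [_ /mapP [r rs ->]|x kx].
  by rewrite -[k]addr0 -valz; apply: vgeM; [exact: vge_val | exact: s0].
have x0 : vge 0 (x / z).
  move: kx; rewrite /vge mulf_eq0 invr_eq0 (negbTE z0) orbF.
  by have [//|x0 /= kx] := eqVneq x 0; rewrite pf_val_div // valz subr_ge0.
have [r rs res] := sres _ x0; exists (z * r); first exact: map_f.
have -> : x - z * r = z * (x / z - r) by rewrite mulrBr mulrCA mulfV // mulr1.
by rewrite -valz; apply: vgeM; first exact: vge_val.
Qed.

Lemma vge_cauchy_limit (c : int) (u : nat -> F) :
  (forall i j : nat, (i <= j)%N -> vge (c + i%:Z) (u j - u i)) ->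
  exists l, forall i, vge (c + i%:Z) (l - u i).
Proof.
move=> cauchy.
have [l lim] : exists l, forall k, exists N, forall i : nat, (N <= i)%N -> vge k (u i - l).
  apply: pf_complete => k; exists `|k - c|%N => i j ki kj.
  have [ij|/ltnW ji] := leqP i j.
    by rewrite -opprB; apply/vgeN/(vgeW _ (cauchy _ _ ij)); lia.
  by apply: (vgeW _ (cauchy _ _ ji)); lia.
exists l => i; have [N limN] := lim (c + i%:Z).
have -> : l - u i = (u (maxn N i) - u i) - (u (maxn N i) - l).
  by rewrite [RHS]addrC opprB addrA subrK.
by apply: vgeB; [apply: cauchy; exact: leq_maxr | apply: limN; exact: leq_maxl].
Qed.

End Valuation.

Section ComplexArithmetic.
Local Open Scope R_scope.

Lemma Cmul_comm z w : Cmul z w = Cmul w z.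
Proof. by case: z w => [? ?] [? ?]; rewrite /Cmul /=; f_equal; ring. Qed.

Lemma Cmul_assoc z w u : Cmul z (Cmul w u) = Cmul (Cmul z w) u.
Proof. by case: z w u => [? ?] [? ?] [? ?]; rewrite /Cmul /=; f_equal; ring. Qed.

Lemma Cmul1r z : Cmul z Cone = z.
Proof. by case: z => [? ?]; rewrite /Cmul /Cone /=; f_equal; ring. Qed.

Lemma Cmul_eq_self a w : a <> Czero -> Cmul a w = a -> w = Cone.
Proof.
case: a w => [a1 a2] [w1 w2]; rewrite /Cmul /Cone /Czero /= => ha [e1 e2].
have Npos : 0 < a1 * a1 + a2 * a2.
  case: (Req_dec a1 0) => h1; case: (Req_dec a2 0) => h2; try nra.
  by case: ha; rewrite h1 h2.
have hw1 : (a1 * a1 + a2 * a2) * (w1 - 1) =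
           a1 * (a1 * w1 - a2 * w2 - a1) + a2 * (a1 * w2 + a2 * w1 - a2) by ring.
have hw2 : (a1 * a1 + a2 * a2) * w2 =
           - a2 * (a1 * w1 - a2 * w2 - a1) + a1 * (a1 * w2 + a2 * w1 - a2) by ring.
rewrite e1 e2 in hw1 hw2.
f_equal; nra.
Qed.

End ComplexArithmetic.

Definition mx_lattice (F : padicField) a b (k : int) (M : 'M[F]_(a, b)) : Prop :=
  forall i j, vge (@pf_val F) k (M i j).

Section MatrixLattice.
Variables (F : padicField) (a b : nat).
Local Notation M := 'M[F]_(a, b).

Lemma mx_lattice_exists (x : M) : exists k, mx_lattice k x.
Proof.
exists (\big[Num.min/0]_(ij : 'I_a * 'I_b) pf_val (x ij.1 ij.2)) => i j.
exact: vgeW (bigmin_le _ (i, j) (fun ij => pf_val (x ij.1 ij.2))) (vge_val _).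
Qed.

Lemma mx_lattice0 k : mx_lattice k (0 : M).
Proof. by move=> i j; rewrite mxE; apply: vge0. Qed.

Lemma mx_latticeW k l (x : M) : l <= k -> mx_lattice k x -> mx_lattice l x.
Proof. by move=> lk kx i j; apply: vgeW (kx i j). Qed.

Lemma mx_latticeD k (x y : M) : mx_lattice k x -> mx_lattice k y -> mx_lattice k (x + y).
Proof. by move=> kx ky i j; rewrite mxE; apply: vgeD. Qed.

Lemma mx_latticeN k (x : M) : mx_lattice k x -> mx_lattice k (- x).
Proof. by move=> kx i j; rewrite mxE; apply: vgeN. Qed.

Lemma mx_latticeB k (x y : M) : mx_lattice k x -> mx_lattice k y -> mx_lattice k (x - y).
Proof. by move=> kx ky; apply: mx_latticeD => //; apply: mx_latticeN. Qed.

Lemma mx_latticeM c k l (x : M) (y : 'M[F]_(b, c)) :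
  mx_lattice k x -> mx_lattice l y -> mx_lattice (k + l) (x *m y).
Proof. by move=> kx ly i j; rewrite mxE; apply: vge_sum => r _; apply: vgeM. Qed.

Lemma mx_lattice_telescope (c : int) (u : nat -> M) :
  (forall t, mx_lattice (c + t%:Z) (u t.+1 - u t)) ->
  forall i j : nat, (i <= j)%N -> mx_lattice (c + i%:Z) (u j - u i).
Proof.
move=> step i j /subnKC <-; elim: (j - i)%N => [|d IH].
  by rewrite addn0 subrr; apply: mx_lattice0.
rewrite addnS -(subrK (u (i + d)%N) (u _)) -addrA; apply: mx_latticeD => //.
by apply: mx_latticeW (step _); lia.
Qed.

Lemma mx_cauchy_limit (c : int) (u : nat -> M) :
  (forall i j : nat, (i <= j)%N -> mx_lattice (c + i%:Z) (u j - u i)) ->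
  exists L, forall i, mx_lattice (c + i%:Z) (L - u i).
Proof.
move=> cauchy.
have entry_limit (ij : 'I_a * 'I_b) :
    exists l, forall i, vge (@pf_val F) (c + i%:Z) (l - u i ij.1 ij.2).
  apply: vge_cauchy_limit => i j ij_le.
  by have := cauchy i j ij_le ij.1 ij.2; rewrite !mxE.
have [L limL] := fin_all_exists entry_limit.
by exists (\matrix_(i, j) L (i, j)) => t i j; rewrite !mxE; apply: limL.
Qed.

Lemma mx_lattice_residue_cover k (x0 : M) :
  exists2 s : seq M, {in s, forall x, mx_lattice k (x - x0)} &
    forall y, mx_lattice k (y - x0) -> exists2 x, x \in s & mx_lattice (k + 1) (y - x).
Proof.
have [s sk sres] := vge_residue_cover F k.
pose child (g : {ffun 'I_a * 'I_b -> seq_sub s}) : M := x0 + \matrix_(i, j) ssval (g (i, j)).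
exists [seq child g | g <- enum {ffun 'I_a * 'I_b -> seq_sub s}].
  move=> _ /mapP [g _ ->] i j; rewrite /child addrAC subrr add0r mxE.
  exact/sk/ssvalP.
move=> y ky.
have entry_residue (ij : 'I_a * 'I_b) :
    exists r : seq_sub s, vge (@pf_val F) (k + 1) ((y - x0) ij.1 ij.2 - ssval r).
  by have [r rs res] := sres _ (ky ij.1 ij.2); exists (SeqSub rs).
have [g gres] := fin_all_exists entry_residue.
exists (child (finfun g)); first by apply: map_f; rewrite mem_enum.
move=> i j; have := gres (i, j).
by rewrite /child opprD addrA !mxE ffunE.
Qed.

End MatrixLattice.

Section LatticeCompact.
Variables (F : padicField) (a b : nat) (I : Type) (U : I -> 'M[F]_(a, b) -> Prop).
Local Notation M := 'M[F]_(a, b).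

Definition covered (B : M -> Prop) (l : list I) : Prop :=
  forall x, B x -> exists i, List.In i l /\ U i x.

Definition no_finite_subcover k (x0 : M) : Prop :=
  forall l, ~ covered (fun y => mx_lattice k (y - x0)) l.

Lemma covered_seq (J : eqType) (s : seq J) (B : J -> M -> Prop) :
  (forall j, j \in s -> exists l, covered (B j) l) ->
  exists l, forall j, j \in s -> covered (B j) l.
Proof.
elim: s => [|j s IH] cov; first by exists nil.
have [lj covj] := cov j (mem_head _ _).
have [ls covs] := IH (fun j' js => cov j' (mem_behead (s := j :: s) js)).
exists (lj ++ ls) => j'; rewrite in_cons => /orP [/eqP-> | js] x Bx.
  by have [i [il Ui]] := covj x Bx; exists i; split => //; apply: List.in_or_app; left.
by have [i [il Ui]] := covs j' js x Bx; exists i; split => //; apply: List.in_or_app; right.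
Qed.

Lemma no_finite_subcover_shrink k x0 : no_finite_subcover k x0 ->
  exists2 x1, no_finite_subcover (k + 1) x1 & mx_lattice k (x1 - x0).
Proof.
move=> nfs; have [s sk scover] := mx_lattice_residue_cover k x0.
apply: NNPP => none.
have covs : forall x1, x1 \in s -> exists l, covered (fun y => mx_lattice (k + 1) (y - x1)) l.
  move=> x1 x1s; apply: NNPP => nocov; apply: none; exists x1 => [l covl|].
    by apply: nocov; exists l.
  exact: sk.
have [l covl] := covered_seq covs.
apply: (nfs l) => y ky; have [x1 x1s yx1] := scover y ky.
exact: covl yx1.
Qed.

Lemma no_finite_subcover_chain (c : int) x0 : no_finite_subcover c x0 ->
  exists u : nat -> M, [/\ u 0%N = x0, forall t, no_finite_subcover (c + t%:Z) (u t)
                        & forall t, mx_lattice (c + t%:Z) (u t.+1 - u t)].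
Proof.
move=> nfs0.
have shrink (p : nat * M) : exists x1,
    (no_finite_subcover (c + p.1%:Z) p.2 -> no_finite_subcover (c + p.1.+1%:Z) x1) /\
    mx_lattice (c + p.1%:Z) (x1 - p.2).
  case: p => t x /=; have [nfs|not_nfs] := classic (no_finite_subcover (c + t%:Z) x).
    have [x1 nfs1 x1x] := no_finite_subcover_shrink nfs.
    by exists x1; split => // _; rewrite -[t.+1]addn1 PoszD addrA.
  by exists x; split=> [/not_nfs|]; last (rewrite subrr; apply: mx_lattice0).
have [step stepP] := choice _ shrink.
pose fix u t := if t is t'.+1 then step (t', u t') else x0.
exists u; split => // t; last exact: (proj2 (stepP (t, u t))).
by elim: t => [|t IH]; [rewrite addr0 | exact: (proj1 (stepP (t, u t)))].
Qed.

End LatticeCompact.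

(* Bisection: a ball without finite subcover contains a smaller such ball, the centres
   converge, and an open set containing the limit swallows a small ball of the chain. *)
Lemma mx_lattice_compact (F : padicField) a b (c : int) :
  is_compact (@mx_open F a b) (mx_lattice c).
Proof.
move=> I U U_open cover; apply: NNPP => nocover.
have nfs0 : no_finite_subcover U c 0.
  by move=> l covl; apply: nocover; exists l => x cx; apply: covl; rewrite subr0.
have [u [u0 nfs step]] := no_finite_subcover_chain nfs0.
have [L limL] := mx_cauchy_limit (mx_lattice_telescope step).
have cL : mx_lattice c L.
  by have := limL 0%N; rewrite u0 (subr0 L) addr0.
have [i0 Ui0L] := cover L cL; have [k kU] := U_open _ _ Ui0L.
pose t := `|k - c|%N.
apply: (nfs t [:: i0]) => y yt; exists i0; split; first by left.
apply: kU => i j; have -> : y i j - L i j = (y - u t) i j - (L - u t) i j.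
  by rewrite !mxE opprB addrA subrK.
by apply: vgeB; [apply: vgeW (yt i j) | apply: vgeW (limL t i j)]; lia.
Qed.

Lemma mx_open_preimage (F : padicField) a b (S : Type) (opS : (S -> Prop) -> Prop)
    (g : 'M[F]_(a, b) -> S) V :
  continuous_on (@mx_open F a b) (fun _ => True) opS g -> opS V -> mx_open (fun x => V (g x)).
Proof.
move=> g_cont V_open x Vgx; have [W [W_open WV]] := g_cont V V_open.
have [k kW] := W_open x (proj2 (WV x I) Vgx).
by exists k => y xy; apply/(WV y I)/kW.
Qed.

Lemma mx_open_translate (F : padicField) a b (U : 'M[F]_(a, b) -> Prop) x0 :
  mx_open U -> mx_open (fun x => U (x0 + x)).
Proof.
move=> U_open x Ux; have [k kU] := U_open _ Ux; exists k => y xy; apply: kU => i j.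
by rewrite !mxE opprD addrACA subrr add0r; have := xy i j.
Qed.

Lemma mx_lattice_image_compact (F : padicField) a b (c : int) (S : Type)
    (opS : (S -> Prop) -> Prop) (h : 'M[F]_(a, b) -> S) :
  (forall V, opS V -> mx_open (fun x => V (h x))) ->
  is_compact opS (fun s => exists x, mx_lattice c x /\ s = h x).
Proof.
move=> h_cont I U U_open cover.
have [l covl] := @mx_lattice_compact F a b c I (fun i x => U i (h x))
  (fun i => h_cont _ (U_open i)) (fun x cx => cover (h x) (ex_intro _ x (conj cx erefl))).
by exists l => _ [x [cx ->]]; apply: covl.
Qed.

Lemma tg_idem_one (G : tdlcGroup) (x : G) : tg_mul x x = x -> x = tg_one G.
Proof.
by move=> xx; have := tg_mulA (tg_inv x) x x; rewrite xx tg_mulVg tg_mul1g.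
Qed.

Lemma hom_lattice_sub_open (F : padicField) (G : tdlcGroup) n (phi : 'rV[F]_n -> G)
    (K : G -> Prop) :
  (forall x y, phi (x + y) = tg_mul (phi x) (phi y)) ->
  continuous_on (@mx_open F 1 n) (fun _ => True) (@tg_open G) phi ->
  tg_open K -> K (tg_one G) -> exists j, forall y, mx_lattice j y -> K (phi y).
Proof.
move=> phiD phi_cont K_open K1.
have phi0 : phi 0 = tg_one G by apply: tg_idem_one; rewrite -phiD addr0.
have K_phi0 : K (phi 0) by rewrite phi0.
have [j jK] := mx_open_preimage phi_cont K_open K_phi0.
by exists j => y jy; apply: jK => i k; rewrite !mxE subr0.
Qed.

Lemma additive_character0 (F : padicField) (psi : F -> Cx) :
  additive_character psi -> psi 0 = Cone.
Proof.
by move=> [psiD [psi_neq0 _]]; apply: (Cmul_eq_self (psi_neq0 0)); rewrite -psiD addr0.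
Qed.

Definition psi_kernel_bound (F : padicField) (psi : F -> Cx) (c0 : int) : Prop :=
  forall (j : int) z, (forall w, vge (@pf_val F) j w -> psi (z * w) = Cone) ->
    vge (@pf_val F) (c0 - j) z.

Lemma additive_character_kernel_bound (F : padicField) (psi : F -> Cx) :
  additive_character psi -> (exists x, psi x <> Cone) -> exists c0, psi_kernel_bound psi c0.
Proof.
move=> psi_char [x0 psi_x0]; have x0_neq0 : x0 != 0.
  by apply/eqP => x00; apply: psi_x0; rewrite x00 additive_character0.
exists (pf_val x0 + 1) => j z psi_zw; rewrite /vge; have [//|z0 /=] := eqVneq z 0.
apply: NNPP => /negP; rewrite -ltNge => val_z; apply: psi_x0.
have jw : vge (@pf_val F) j (x0 / z) by rewrite /vge pf_val_div //; apply/orP; right; lia.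
by have := psi_zw _ jw; rewrite mulrC divfK.
Qed.

Lemma row_lattice_of_psi_trivial (F : padicField) (psi : F -> Cx) c0 n (j : int)
    (u : 'rV[F]_n) :
  psi_kernel_bound psi c0 ->
  (forall y : 'rV[F]_n, mx_lattice j y -> psi ((u *m y^T) 0 0) = Cone) ->
  mx_lattice (c0 - j) u.
Proof.
move=> psi_c0 psi_u i0 k; rewrite (ord1 i0); apply: psi_c0 => w jw.
pose y : 'rV[F]_n := \row_l (if l == k then w else 0).
have jy : mx_lattice j y by move=> p q; rewrite mxE; case: (q == k) => //; apply: vge0.
have := psi_u y jy; rewrite mxE (bigD1 k) //= big1 ?addr0; first by rewrite !mxE eqxx.
by move=> l lk; rewrite !mxE (negbTE lk) mulr0.
Qed.

Lemma seq_lower_bound (T : Type) (g : T -> int) (s : seq T) :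
  exists k, forall x, List.In x s -> k <= g x.
Proof.
elim: s => [|x s [k sk]]; first by exists 0.
exists (Num.min (g x) k) => y [<-|ys]; rewrite ge_min ?lexx //.
by rewrite sk ?orbT.
Qed.

Definition lattice_bound (F : padicField) m n (A : 'M[F]_(m, n)) (w : int) : Prop :=
  forall (a : int) (x : 'rV[F]_m), mx_lattice a (x *m A) -> mx_lattice (a + w) x.

Section LatticeBound.
Variables (F : padicField) (m n : nat).
Implicit Types A : 'M[F]_(m, n).

Lemma lattice_boundW A w w' : w' <= w -> lattice_bound A w -> lattice_bound A w'.
Proof. by move=> w'w Aw a x ax; apply: mx_latticeW (Aw a x ax); lia. Qed.

Lemma lattice_bound_perturb A A' (B : 'M[F]_(n, m)) w :
  A *m B = 1%:M -> mx_lattice w B -> mx_lattice (1 - w) (A' - A) -> lattice_bound A' w.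
Proof.
move=> AB wB A'A a x aA'.
have x_split : x = x *m A' *m B - x *m (A' - A) *m B.
  by rewrite -mulmxBl -mulmxBr opprB addrC subrK -mulmxA AB mulmx1.
have step b : mx_lattice b x -> mx_lattice (Num.min (a + w) (b + 1)) x.
  move=> bx; rewrite x_split; apply: mx_latticeB.
    by apply: mx_latticeW (mx_latticeM aA' wB); lia.
  by apply: mx_latticeW (mx_latticeM (mx_latticeM bx A'A) wB); lia.
have [b bx] := mx_lattice_exists x.
have bootstrap (d : nat) : mx_lattice (Num.min (a + w) (b + d%:Z)) x.
  elim: d => [|d IH]; first by apply: mx_latticeW bx; lia.
  by apply: mx_latticeW (step _ IH); lia.
by apply: mx_latticeW (bootstrap `|(a + w - b)%R|%N); lia.
Qed.

Lemma nondegenerate_right_inverse A : nondegenerate_pairing A -> exists B, A *m B = 1%:M.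
Proof.
move=> [A_inj _]; apply/row_freeP; rewrite -kermx_eq0; apply/eqP/row_matrixP => i.
rewrite row0; apply: A_inj => y; rewrite /pairing.
by have /sub_kermxP -> := row_sub i (kermx A); rewrite mul0mx mxE.
Qed.

Lemma nondegenerate_lattice_bound A : nondegenerate_pairing A -> exists w, lattice_bound A w.
Proof.
move=> nondeg; have [B AB] := nondegenerate_right_inverse nondeg.
have [w wB] := mx_lattice_exists B; exists w; apply: (lattice_bound_perturb AB wB).
by rewrite subrr; apply: mx_lattice0.
Qed.

Lemma compact_lattice_bound (Omega : 'M[F]_(m, n) -> Prop) :
  is_compact (@mx_open F m n) Omega -> (forall A, Omega A -> nondegenerate_pairing A) ->
  exists w, forall A, Omega A -> lattice_bound A w.
Proof.
move=> Omega_compact nondeg.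
pose U (p : 'M[F]_(m, n) * int) A :=
  exists2 B, p.1 *m B = 1%:M /\ mx_lattice p.2 B & mx_lattice (1 - p.2) (A - p.1).
have U_open p : mx_open (U p).
  move=> A [B pB A_near]; exists (1 - p.2) => A' A'A; exists B => //.
  rewrite -(subrK A A') -addrA; apply: mx_latticeD => // i j.
  by rewrite !mxE; apply: A'A.
have U_cover A : Omega A -> exists p, U p A.
  move=> OA; have [B AB] := nondegenerate_right_inverse (nondeg A OA).
  have [w wB] := mx_lattice_exists B; exists (A, w); exists B => //.
  by rewrite subrr; apply: mx_lattice0.
have [l covl] := Omega_compact _ U U_open U_cover.
have [w lw] := seq_lower_bound (fun p => p.2) l.
exists w => A OA; have [p [pl [B [pB wB] A_near]]] := covl A OA.
exact: lattice_boundW (lw p pl) (lattice_bound_perturb pB wB A_near).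
Qed.

End LatticeBound.

Section SupportBound.
Variables (F : padicField) (psi : F -> Cx) (G : tdlcGroup) (m n : nat).
Variables (phiC : 'rV[F]_m -> G) (phiD : 'rV[F]_n -> G) (A : 'M[F]_(m, n)).
Variables (chi : G -> Cx) (f : G -> Cx) (K : G -> Prop).
Hypothesis psiD : forall x y, psi (x + y) = Cmul (psi x) (psi y).
Hypothesis f_K : right_invariant K f.
Hypothesis f_equiv : equivariant phiC phiD A psi chi f.

Lemma equivariant_char_one x y : K (phiD y) -> f (phiC x) <> Czero ->
  Cmul (chi (phiD y)) (psi (pairing A x y)) = Cone.
Proof. by move=> Ky fx; apply: (Cmul_eq_self fx); rewrite Cmul_assoc -f_equiv f_K. Qed.

Lemma psi_pairing_sub_one x1 x2 y : K (phiD y) ->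
  f (phiC x1) <> Czero -> f (phiC x2) <> Czero -> psi (pairing A (x1 - x2) y) = Cone.
Proof.
move=> Ky fx1 fx2.
have e1 := equivariant_char_one Ky fx1; have e2 := equivariant_char_one Ky fx2.
have pairingB : pairing A x1 y = pairing A (x1 - x2) y + pairing A x2 y.
  by rewrite /pairing -[in LHS](subrK x2 x1) !mulmxDl mxE.
rewrite pairingB psiD in e1.
by rewrite -e1 Cmul_assoc (Cmul_comm (chi _)) -Cmul_assoc e2 Cmul1r.
Qed.

Lemma psi_pairing_one x y : K (phiD y) -> chi (phiD y) = Cone -> f (phiC x) <> Czero ->
  psi (pairing A x y) = Cone.
Proof. by move=> Ky chi1 fx; have := equivariant_char_one Ky fx; rewrite chi1 Cmul_comm Cmul1r. Qed.

Variables (c0 j0 : int).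
Hypothesis psi_c0 : psi_kernel_bound psi c0.
Hypothesis K_lattice : forall y, mx_lattice j0 y -> K (phiD y).

Lemma support_sub_lattice x1 x2 : f (phiC x1) <> Czero -> f (phiC x2) <> Czero ->
  mx_lattice (c0 - j0) ((x1 - x2) *m A).
Proof.
move=> fx1 fx2; apply: (row_lattice_of_psi_trivial psi_c0) => y j0y.
exact: psi_pairing_sub_one (K_lattice j0y) fx1 fx2.
Qed.

Lemma support_lattice_conductor k x : conductor_le phiD chi k -> f (phiC x) <> Czero ->
  mx_lattice (c0 - Num.max j0 k) (x *m A).
Proof.
move=> chi_k fx; apply: (row_lattice_of_psi_trivial psi_c0) => y jy.
apply: psi_pairing_one fx; first by apply/K_lattice/(mx_latticeW _ jy); rewrite le_max lexx.
by apply: chi_k => i; apply: vgeW (jy 0 i); rewrite le_max lexx orbT.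
Qed.

End SupportBound.

Theorem mainTheorem6
  (F : padicField) (psi : F -> Cx)
  (Hpsi : additive_character psi) (Hpsi_nontriv : exists x, psi x <> Cone)
  (G0 : tdlcGroup) (m n : nat) (C D : G0 -> Prop)
  (phiC : 'rV[F]_m -> G0) (phiD : 'rV[F]_n -> G0)
  (HC : closed_subgroup C) (HD : closed_subgroup D)
  (HphiC : topgroup_iso_onto phiC C) (HphiD : topgroup_iso_onto phiD D) :
  (forall (A : 'M[F]_(m, n)) (chi : G0 -> Cx) (f : G0 -> Cx),
      nondegenerate_pairing A ->
      continuous_character D chi ->
      (exists K, open_compact_subgroup K /\ right_invariant K f) ->
      equivariant phiC phiD A psi chi f ->
      exists S, is_compact (@tg_open G0) S /\
        forall c, C c -> f c <> Czero -> S c)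
  /\
  (forall (K0 : G0 -> Prop) (Omega : 'M[F]_(m, n) -> Prop) (k : int),
      open_compact_subgroup K0 ->
      is_compact (@mx_open F m n) Omega ->
      (forall A, Omega A -> nondegenerate_pairing A) ->
      exists S, is_compact (@tg_open G0) S /\
        forall (A : 'M[F]_(m, n)) (chi : G0 -> Cx) (f : G0 -> Cx),
          Omega A ->
          continuous_character D chi ->
          conductor_le phiD chi k ->
          right_invariant K0 f ->
          equivariant phiC phiD A psi chi f ->
          forall c, C c -> f c <> Czero -> S c).
Proof.
have [homC [_ [C_im [contC _]]]] := HphiC; have [homD [_ [_ [contD _]]]] := HphiD.
have C_phi c : C c -> exists x, c = phiC x by move/C_im.
have [c0 psi_c0] := additive_character_kernel_bound Hpsi Hpsi_nontriv.
have psiD := proj1 Hpsi.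
split.
- move=> A chi f nondeg _ [K [[[K1 _] [K_open _]] f_K]] f_equiv.
  have [j0 j0K] := hom_lattice_sub_open homD contD K_open K1.
  have [w Aw] := nondegenerate_lattice_bound nondeg.
  have [[x2 fx2]|f0] := classic (exists x2, f (phiC x2) <> Czero); last first.
    exists (fun _ => False); split => [I U _ _|c /C_phi [x ->] fx]; first by exists nil.
    by apply: f0; exists x.
  exists (fun g => exists z, mx_lattice (c0 - j0 + w) z /\ g = phiC (x2 + z)); split.
    apply: mx_lattice_image_compact => V /(mx_open_preimage contC).
    exact: mx_open_translate.
  move=> c /C_phi [x1 ->] fx1; exists (x1 - x2); split; last by rewrite addrC subrK.
  exact/Aw/(support_sub_lattice psiD f_K f_equiv psi_c0 j0K).
- move=> K0 Omega k [[K01 _] [K0_open _]] Omega_compact nondeg.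
  have [j0 j0K] := hom_lattice_sub_open homD contD K0_open K01.
  have [w Omega_w] := compact_lattice_bound Omega_compact nondeg.
  exists (fun g => exists z, mx_lattice (c0 - Num.max j0 k + w) z /\ g = phiC z); split.
    by apply: mx_lattice_image_compact => V /(mx_open_preimage contC).
  move=> A chi f OA _ chi_k f_K f_equiv c /C_phi [x ->] fx; exists x; split => //.
  exact: Omega_w A OA _ _ (support_lattice_conductor f_K f_equiv psi_c0 j0K chi_k fx).
Qed.
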